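(* Let $N \ge 1$ and let $f_N(t) = \sum_{n=1}^N c_n e^{\alpha_n t}$ with real coefficients $c_n$ and pairwise distinct nonzero real rate constants $\alpha_n$ (no sign condition on $f_N$ is assumed). For $k \ge 0$ let $$I_{(k)}(t) := \int_0^{t}\int_0^{t^{(1)}}\cdots\int_0^{t^{(k)}} f_N(t^{(k+1)})\, dt^{(k+1)} \cdots dt^{(1)}$$ denote the $(k+1)$-fold iterated integral of $f_N$ from $0$. Let $t_1,\dots,t_{2N+1}$ be distinct nonnegative reals. Given $\{f_N(t_i) : i = 1,\dots,2N\}$ and $\{I_{(k)}(t_i) : k = 1,2,\dots,N,\ i = 1,\dots,2N+1\}$, the coefficients $c_n$ and rate constants $\alpha_n$, $n = 1,\dots,N$, are uniquely determined. *)

From Stdlib Require Import Reals.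
From Coquelicot Require Import Coquelicot.
Open Scope R_scope.

(* f_N(t) = sum_{n=0}^{N-1} c n * exp (a n * t)   (indices shifted to 0..N-1) *)
Fixpoint expsum (N : nat) (c a : nat -> R) (t : R) : R :=
  match N with
  | O => 0
  | S m => expsum m c a t + c m * exp (a m * t)
  end.

(* iint f k t = I_(k)(t): the (k+1)-fold iterated integral of f from 0. *)
Fixpoint iint (f : R -> R) (k : nat) (t : R) : R :=
  match k with
  | O => RInt f 0 t
  | S k' => RInt (iint f k') 0 t
  end.

(* Let D be the difference of the two (N+1)-fold iterated integrals I_(N);
   its lower iterated integrals all vanish at 0.  D vanishes at the 2N+1
   given points of [0,oo), so by Rolle every lower iterated integral of the
   difference, counting its zero at 0, still has 2N+1 zeros in [0,oo), and
   the difference f_N - f'_N itself, an exponential sum with 2N terms, has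
   2N zeros.  Multiplying an exponential sum by exp(-beta t) and
   differentiating removes one term; by induction an exponential sum with
   M terms and M zeros vanishes identically, and an identically vanishing
   one has total coefficient 0 at every rate.  As the rates on each side
   are distinct, this pairs the terms of f_N and f'_N.  Only the values of
   I_(N) are needed. *)

From Stdlib Require Import Reals Lra Lia Classical IndefiniteDescription.
From Coquelicot Require Import Coquelicot.
Open Scope R_scope.

Fixpoint rsum (M : nat) (F : nat -> R) : R :=
  match M with O => 0 | S m => rsum m F + F m end.

Lemma rsum_ext M F G :
  (forall j, (j < M)%nat -> F j = G j) -> rsum M F = rsum M G.
Proof.
  induction M as [|M IH]; intros H; simpl; [reflexivity|].
  rewrite IH by (intros; apply H; lia); rewrite H by lia; reflexivity.
Qed.

Lemma rsum_scal_l M F r : rsum M (fun j => r * F j) = r * rsum M F.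
Proof. induction M as [|M IH]; simpl; [ring|]. rewrite IH; ring. Qed.

Lemma rsum_split N M F :
  rsum (N + M) F = rsum N F + rsum M (fun j => F (N + j)%nat).
Proof.
  induction M as [|M IH]; simpl.
  - rewrite Nat.add_0_r; ring.
  - rewrite Nat.add_succ_r; simpl; rewrite IH; ring.
Qed.

Definition bump (k j : nat) : nat := if (j <? k)%nat then j else S j.

Lemma rsum_bump M F k :
  (k <= M)%nat -> rsum (S M) F = rsum M (fun j => F (bump k j)) + F k.
Proof.
  revert k; induction M as [|M IH]; intros k Hk.
  - replace k with 0%nat by lia; simpl; ring.
  - change (rsum (S (S M)) F) with (rsum (S M) F + F (S M)).
    destruct (Nat.eq_dec k (S M)) as [->|Hne].
    + f_equal; apply rsum_ext; intros j Hj; unfold bump.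
      destruct (Nat.ltb_spec j (S M)); [reflexivity|lia].
    + rewrite (IH k) by lia; simpl.
      replace (bump k M) with (S M) by (unfold bump; destruct (Nat.ltb_spec M k); lia).
      ring.
Qed.

Definition glue (N : nat) (u v : nat -> R) (j : nat) : R :=
  if (j <? N)%nat then u j else v (j - N)%nat.

Lemma rsum_glue N M (phi : R -> R -> R) d b d' b' :
  rsum (N + M) (fun j => phi (glue N d d' j) (glue N b b' j)) =
  rsum N (fun j => phi (d j) (b j)) + rsum M (fun j => phi (d' j) (b' j)).
Proof.
  rewrite rsum_split; f_equal; apply rsum_ext; intros j Hj; unfold glue.
  - destruct (Nat.ltb_spec j N); [reflexivity|lia].
  - destruct (Nat.ltb_spec (N + j) N); [lia|].
    now replace (N + j - N)%nat with j by lia.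
Qed.

Lemma expsum_rsum M d b t :
  expsum M d b t = rsum M (fun j => d j * exp (b j * t)).
Proof. induction M as [|M IH]; simpl; [reflexivity|]. now rewrite IH. Qed.

Lemma expsum_bump M d b k t : (k <= M)%nat ->
  expsum (S M) d b t =
  expsum M (fun j => d (bump k j)) (fun j => b (bump k j)) t + d k * exp (b k * t).
Proof. intros Hk; rewrite !expsum_rsum; exact (rsum_bump M _ k Hk). Qed.

Lemma expsum_sub N M c a c' a' t :
  expsum N c a t - expsum M c' a' t =
  expsum (N + M) (glue N c (fun j => - c' j)) (glue N a a') t.
Proof.
  rewrite !expsum_rsum, (rsum_glue N M (fun x y => x * exp (y * t))).
  rewrite (rsum_ext M (fun j => - c' j * exp (a' j * t))
                    (fun j => -1 * (c' j * exp (a' j * t)))) by (intros; ring).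
  rewrite rsum_scal_l; ring.
Qed.

Definition rate_coef (M : nat) (d b : nat -> R) (beta : R) : R :=
  rsum M (fun j => if Req_EM_T (b j) beta then d j else 0).

Lemma rate_coef_bump M d b k beta : (k <= M)%nat ->
  rate_coef (S M) d b beta =
  rate_coef M (fun j => d (bump k j)) (fun j => b (bump k j)) beta
  + (if Req_EM_T (b k) beta then d k else 0).
Proof. intros Hk; exact (rsum_bump M _ k Hk). Qed.

Lemma rate_coef_sub N M c a c' a' beta :
  rate_coef N c a beta - rate_coef M c' a' beta =
  rate_coef (N + M) (glue N c (fun j => - c' j)) (glue N a a') beta.
Proof.
  unfold rate_coef.
  rewrite (rsum_glue N M (fun x y => if Req_EM_T y beta then x else 0)).
  rewrite (rsum_ext M (fun j => if Req_EM_T (a' j) beta then - c' j else 0)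
                      (fun j => -1 * (if Req_EM_T (a' j) beta then c' j else 0)))
    by (intros; destruct Req_EM_T; ring).
  rewrite rsum_scal_l; ring.
Qed.

Lemma rate_coef_shift M d b g beta :
  rate_coef M (fun j => d j * (b j - g)) (fun j => b j - g) (beta - g) =
  (beta - g) * rate_coef M d b beta.
Proof.
  unfold rate_coef; rewrite <- rsum_scal_l; apply rsum_ext; intros j _.
  destruct (Req_EM_T (b j - g) (beta - g)), (Req_EM_T (b j) beta); try lra.
  replace (b j) with beta by lra; ring.
Qed.

Lemma rate_coef_single_rate M d b beta :
  (forall j, (j < M)%nat -> b j = beta) -> rate_coef M d b beta = expsum M d b 0.
Proof.
  intros Hb; rewrite expsum_rsum; apply rsum_ext; intros j Hj.
  destruct (Req_EM_T (b j) beta); [|exfalso; auto].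
  rewrite Rmult_0_r, exp_0; ring.
Qed.

Lemma rate_coef_absent M d b beta :
  (forall j, (j < M)%nat -> b j <> beta) -> rate_coef M d b beta = 0.
Proof.
  intros Hb; transitivity (rsum M (fun _ => 0)).
  - apply rsum_ext; intros j Hj.
    destruct (Req_EM_T (b j) beta); [exfalso; exact (Hb j Hj e) | reflexivity].
  - clear Hb; induction M as [|M IH]; simpl; [ring | rewrite IH; ring].
Qed.

Lemma rate_coef_rate M d b k :
  (forall n m, (n < M)%nat -> (m < M)%nat -> n <> m -> b n <> b m) ->
  (k < M)%nat -> rate_coef M d b (b k) = d k.
Proof.
  intros Hinj Hk; destruct M as [|M]; [lia|].
  rewrite (rate_coef_bump M d b k) by lia.
  rewrite rate_coef_absent; [destruct Req_EM_T; [ring|congruence]|].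
  intros j Hj; apply Hinj; unfold bump; destruct (Nat.ltb_spec j k); lia.
Qed.

Lemma rate_coef_match N M c a c' a' :
  (forall n m, (n < N)%nat -> (m < N)%nat -> n <> m -> a n <> a m) ->
  (forall n m, (n < M)%nat -> (m < M)%nat -> n <> m -> a' n <> a' m) ->
  (forall n, (n < N)%nat -> c n <> 0) ->
  (forall beta, rate_coef N c a beta = rate_coef M c' a' beta) ->
  forall n, (n < N)%nat -> exists m, (m < M)%nat /\ c n = c' m /\ a n = a' m.
Proof.
  intros Ha Ha' Hc Hcoef n Hn.
  specialize (Hcoef (a n)); rewrite rate_coef_rate in Hcoef by assumption.
  destruct (classic (exists m, (m < M)%nat /\ a' m = a n)) as [[m [Hm Ham]]|Hno].
  - exists m; rewrite <- Ham, rate_coef_rate in Hcoef by assumption; auto.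
  - exfalso; apply (Hc n Hn); rewrite Hcoef.
    apply rate_coef_absent; intros j Hj E; apply Hno; eauto.
Qed.

Lemma MVT_is_derive f df a b : a < b -> (forall x, is_derive f x (df x)) ->
  exists c, a < c < b /\ f b - f a = df c * (b - a).
Proof.
  intros Hab Hd; destruct (MVT_cor2 f df a b Hab) as [c [Hmvt Hc]].
  - intros x _; apply is_derive_Reals, Hd.
  - eauto.
Qed.

Lemma null_derivative_eq f df x y :
  (forall z, is_derive f z (df z)) -> (forall z, df z = 0) -> f x = f y.
Proof.
  intros Hd H0; destruct (Rtotal_order x y) as [Hxy|[->|Hxy]]; [| reflexivity |];
    destruct (MVT_is_derive f df _ _ Hxy Hd) as [c [_ Hc]]; rewrite H0 in Hc; lra.
Qed.

Lemma is_derive_eq0 (f : R -> R) (x l : R) : is_derive f x l -> (forall y, f y = 0) -> l = 0.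
Proof.
  intros Hd Hf; rewrite <- (is_derive_unique _ _ _ Hd).
  rewrite (Derive_ext f (fun _ => 0)) by exact Hf; apply Derive_const.
Qed.

Lemma is_derive_expsum M d b t :
  is_derive (expsum M d b) t (expsum M (fun j => d j * b j) b t).
Proof.
  induction M as [|M IH]; simpl.
  - apply (is_derive_const 0).
  - apply (is_derive_plus (expsum M d b) (fun t => d M * exp (b M * t))); [exact IH|].
    auto_derive; [exact I | ring].
Qed.

Lemma continuous_expsum M d b x : continuous (expsum M d b) x.
Proof. apply (@ex_derive_continuous R_AbsRing R_NormedModule); eexists; apply is_derive_expsum. Qed.

Lemma expsum_peel M d b e beta t :
  exp (- beta * t) * (expsum M d b t + e * exp (beta * t)) =
  expsum M d (fun j => b j - beta) t + e.
Proof.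
  rewrite !expsum_rsum, Rmult_plus_distr_l, <- rsum_scal_l; f_equal.
  - apply rsum_ext; intros j _.
    replace ((b j - beta) * t) with (- beta * t + b j * t) by ring.
    rewrite exp_plus; ring.
  - replace (exp (- beta * t) * (e * exp (beta * t)))
      with (e * exp (- beta * t + beta * t)) by (rewrite exp_plus; ring).
    replace (- beta * t + beta * t) with 0 by ring.
    rewrite exp_0; ring.
Qed.

Lemma is_derive_peel M d b e beta t :
  is_derive (fun t => exp (- beta * t) * (expsum M d b t + e * exp (beta * t))) t
    (expsum M (fun j => d j * (b j - beta)) (fun j => b j - beta) t).
Proof.
  apply (is_derive_ext (fun t => expsum M d (fun j => b j - beta) t + e)).
  { intro u; symmetry; apply expsum_peel. }
  rewrite <- (Rplus_0_r (expsum M _ _ t)).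
  apply (is_derive_plus (expsum M d (fun j => b j - beta)) (fun _ => e)).
  - apply is_derive_expsum.
  - apply (@is_derive_const R_AbsRing R_NormedModule).
Qed.

Definition chain_in (P : R -> Prop) (n : nat) : Prop :=
  exists s : nat -> R,
    (forall i, (S i < n)%nat -> s i < s (S i)) /\ (forall i, (i < n)%nat -> P (s i)).

Lemma chain_in_impl (P Q : R -> Prop) n :
  (forall x, P x -> Q x) -> chain_in P n -> chain_in Q n.
Proof. intros HPQ [s [Hs HP]]; exists s; split; auto. Qed.

Lemma chain_in_cons (P : R -> Prop) x0 n :
  P x0 -> chain_in (fun x => x0 < x /\ P x) n -> chain_in P (S n).
Proof.
  intros H0 [s [Hs HP]].
  exists (fun i => match i with O => x0 | S i => s i end); split.
  - intros [|i] Hi; [apply HP; lia | apply Hs; lia].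
  - intros [|i] Hi; [exact H0 | apply HP; lia].
Qed.

Lemma chain_in_snoc (P : R -> Prop) y n :
  P y -> chain_in (fun x => P x /\ x < y) n -> chain_in P (S n).
Proof.
  intros Hy [s [Hs HP]].
  exists (fun i => if (i <? n)%nat then s i else y); split.
  - intros i Hi; destruct (Nat.ltb_spec i n); [|lia].
    destruct (Nat.ltb_spec (S i) n); [apply Hs | apply HP]; lia.
  - intros i Hi; destruct (Nat.ltb_spec i n); [apply HP; lia | exact Hy].
Qed.

Lemma chain_in_from_first (P : R -> Prop) n :
  chain_in P (S n) -> exists x0, P x0 /\ chain_in (fun x => x0 <= x /\ P x) (S n).
Proof.
  intros [s [Hs HP]]; exists (s 0%nat); split; [apply HP; lia|].
  exists s; split; [exact Hs|]; intros i Hi; split; [|auto].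
  induction i as [|i IH]; [lra|].
  specialize (IH ltac:(lia)); specialize (Hs i Hi); lra.
Qed.

Lemma chain_in_rolle f df lo n : (forall x, is_derive f x (df x)) ->
  chain_in (fun x => lo <= x /\ f x = 0) (S n) ->
  chain_in (fun x => lo < x /\ df x = 0) n.
Proof.
  intros Hd [s [Hs Hz]].
  assert (Hroot : forall i, exists c, (i < n)%nat -> s i < c < s (S i) /\ df c = 0).
  { intro i; destruct (Nat.lt_ge_cases i n) as [Hi|Hi]; [|exists 0; intro; lia].
    assert (Hlt : s i < s (S i)) by (apply Hs; lia).
    destruct (MVT_is_derive f df _ _ Hlt Hd) as [c [Hc Hmvt]].
    exists c; intros _; split; [exact Hc|].
    rewrite (proj2 (Hz i ltac:(lia))), (proj2 (Hz (S i) ltac:(lia))) in Hmvt.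
    destruct (Rmult_integral (df c) (s (S i) - s i)); [lra | assumption | lra]. }
  destruct (functional_choice _ Hroot) as [s' Hs'].
  exists s'; split.
  - intros i Hi; pose proof (Hs' i ltac:(lia)); pose proof (Hs' (S i) Hi); lra.
  - intros i Hi; destruct (Hs' i Hi), (Hz i ltac:(lia)); split; [lra | assumption].
Qed.

Lemma fin_argmax (z : nat -> R) n :
  exists m, (m <= n)%nat /\ forall j, (j <= n)%nat -> z j <= z m.
Proof.
  induction n as [|n [m [Hm Hmax]]].
  - exists 0%nat; split; [lia|]; intros j Hj; replace j with 0%nat by lia; lra.
  - destruct (Rle_dec (z m) (z (S n))).
    + exists (S n); split; [lia|]; intros j Hj.
      destruct (Nat.eq_dec j (S n)) as [->|]; [lra|].
      specialize (Hmax j ltac:(lia)); lra.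
    + exists m; split; [lia|]; intros j Hj.
      destruct (Nat.eq_dec j (S n)) as [->|]; [lra | apply Hmax; lia].
Qed.

Lemma chain_in_of_injective (P : R -> Prop) n z :
  (forall i j, (i < n)%nat -> (j < n)%nat -> i <> j -> z i <> z j) ->
  (forall i, (i < n)%nat -> P (z i)) -> chain_in P n.
Proof.
  revert P z; induction n as [|n IH]; intros P z Hinj HP.
  - exists z; split; intros; lia.
  - destruct (fin_argmax z n) as [m [Hm Hmax]].
    assert (Hlt : forall i, (i <= n)%nat -> i <> m -> z i < z m).
    { intros i Hi Him; specialize (Hmax i Hi).
      assert (z i <> z m) by (apply Hinj; lia); lra. }
    apply (chain_in_snoc P (z m)); [apply HP; lia|].
    apply (IH _ (fun i => if Nat.eqb i m then z n else z i)).
    + intros i j Hi Hj Hij.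
      destruct (Nat.eqb_spec i m), (Nat.eqb_spec j m); subst; try lia; apply Hinj; lia.
    + intros i Hi; destruct (Nat.eqb_spec i m) as [->|Him];
        (split; [apply HP; lia | apply Hlt; lia]).
Qed.

Lemma expsum_zeros_eq0 M d b :
  chain_in (fun x => expsum M d b x = 0) M -> forall t, expsum M d b t = 0.
Proof.
  revert d b; induction M as [|M IH]; intros d b Hz t; [reflexivity|].
  set (g := fun t => exp (- b M * t) * expsum (S M) d b t).
  set (dg := expsum M (fun j => d j * (b j - b M)) (fun j => b j - b M)).
  assert (Hdg : forall x, is_derive g x (dg x)) by (intro; apply is_derive_peel).
  destruct (chain_in_from_first _ _ Hz) as [x0 [Hx0 Hz0]].
  assert (Hg : chain_in (fun x => x0 <= x /\ g x = 0) (S M)).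
  { refine (chain_in_impl _ _ _ _ Hz0); intros x [Hx Hfx]; split; [exact Hx|].
    unfold g; rewrite Hfx; ring. }
  assert (Hdg0 : forall x, dg x = 0).
  { apply IH; refine (chain_in_impl _ _ _ _ (chain_in_rolle g dg x0 M Hdg Hg)).
    intros x [_ Hx]; exact Hx. }
  pose proof (null_derivative_eq g dg t x0 Hdg Hdg0) as Hconst.
  unfold g in Hconst; rewrite Hx0, Rmult_0_r in Hconst.
  destruct (Rmult_integral _ _ Hconst); [|assumption].
  pose proof (exp_pos (- b M * t)); lra.
Qed.

Lemma rate_coef_eq0 M d b :
  (forall t, expsum M d b t = 0) -> forall beta, rate_coef M d b beta = 0.
Proof.
  revert d b; induction M as [|M IH]; intros d b Hz beta; [reflexivity|].
  destruct (classic (exists k, (k <= M)%nat /\ b k <> beta)) as [[k [Hk Hbk]]|Hall].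
  - set (d' := fun j => d (bump k j)); set (b' := fun j => b (bump k j)).
    assert (Hdg : forall t,
      expsum M (fun j => d' j * (b' j - b k)) (fun j => b' j - b k) t = 0).
    { intro t; apply (is_derive_eq0 _ t _ (is_derive_peel M d' b' (d k) (b k) t)).
      intro u; unfold d', b'; rewrite <- (expsum_bump M d b k u Hk), Hz; ring. }
    pose proof (IH _ _ Hdg (beta - b k)) as Hc; rewrite rate_coef_shift in Hc.
    rewrite (rate_coef_bump M d b k) by exact Hk; fold d' b'.
    destruct (Req_EM_T (b k) beta); [contradiction|].
    destruct (Rmult_integral _ _ Hc); lra.
  - rewrite rate_coef_single_rate; [apply Hz|].
    intros j Hj; apply NNPP; intro Hne; apply Hall; exists j; split; [lia | exact Hne].
Qed.

Definition iter_int (f : R -> R) (k : nat) : R -> R :=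
  match k with O => f | S k => iint f k end.

Lemma is_derive_RInt_from0 (f : R -> R) (x : R) :
  (forall y, continuous f y) -> is_derive (RInt f 0) x (f x).
Proof.
  intros Hf; apply (is_derive_RInt f (RInt f 0) 0 x); [|apply Hf].
  apply filter_forall; intro y.
  apply (@RInt_correct R_CompleteNormedModule), (@ex_RInt_continuous R_CompleteNormedModule).
  intros; apply Hf.
Qed.

Lemma is_derive_iter_int f : (forall x, continuous f x) ->
  forall k x, is_derive (iter_int f (S k)) x (iter_int f k x).
Proof.
  intros Hf; induction k as [|k IH]; intro x.
  - exact (is_derive_RInt_from0 f x Hf).
  - apply (is_derive_RInt_from0 (iter_int f (S k))).
    intro y; apply (@ex_derive_continuous R_AbsRing R_NormedModule); eexists; apply IH.
Qed.

Lemma iter_int_S_at0 f k : iter_int f (S k) 0 = 0.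
Proof. destruct k; apply (@RInt_point R_CompleteNormedModule). Qed.

Lemma chain_in_descend (G : nat -> R -> R) lo n m :
  (forall k x, is_derive (G (S k)) x (G k x)) -> (forall k, G (S k) lo = 0) ->
  chain_in (fun x => lo <= x /\ G (S m) x = 0) (S n) ->
  chain_in (fun x => lo < x /\ G 0%nat x = 0) n.
Proof.
  intros Hd H0; induction m as [|m IH]; intro Hz.
  - exact (chain_in_rolle _ _ lo n (Hd 0%nat) Hz).
  - apply IH, (chain_in_cons _ lo); [split; [lra | apply H0]|].
    refine (chain_in_impl _ _ _ _ (chain_in_rolle _ _ lo n (Hd (S m)) Hz)).
    intros x [Hx Hgx]; repeat split; [lra | lra | exact Hgx].
Qed.

Theorem corollary4 (N : nat) (HN : (1 <= N)%nat)
  (c a c' a' : nat -> R) (t : nat -> R)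
  (Ha_nz : forall n, (n < N)%nat -> a n <> 0)
  (Ha_inj : forall n m, (n < N)%nat -> (m < N)%nat -> n <> m -> a n <> a m)
  (Hc_nz : forall n, (n < N)%nat -> c n <> 0)
  (Ha'_nz : forall n, (n < N)%nat -> a' n <> 0)
  (Ha'_inj : forall n m, (n < N)%nat -> (m < N)%nat -> n <> m -> a' n <> a' m)
  (Hc'_nz : forall n, (n < N)%nat -> c' n <> 0)
  (Ht_nonneg : forall i, (i < 2 * N + 1)%nat -> 0 <= t i)
  (Ht_inj : forall i j, (i < 2 * N + 1)%nat -> (j < 2 * N + 1)%nat ->
             i <> j -> t i <> t j)
  (Hf : forall i, (i < 2 * N)%nat ->
          expsum N c a (t i) = expsum N c' a' (t i))
  (HI : forall k i, (1 <= k <= N)%nat -> (i < 2 * N + 1)%nat ->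
          iint (expsum N c a) k (t i) = iint (expsum N c' a') k (t i)) :
  (forall n, (n < N)%nat -> exists m, (m < N)%nat /\ c n = c' m /\ a n = a' m) /\
  (forall m, (m < N)%nat -> exists n, (n < N)%nat /\ c n = c' m /\ a n = a' m).
Proof.
  set (G := fun k x => iter_int (expsum N c a) k x - iter_int (expsum N c' a') k x).
  assert (HG : forall k x, is_derive (G (S k)) x (G k x)).
  { intros k x.
    apply (is_derive_minus (iter_int (expsum N c a) (S k)) (iter_int (expsum N c' a') (S k)));
      apply is_derive_iter_int, continuous_expsum. }
  assert (HG0 : forall k, G (S k) 0 = 0).
  { intro k; unfold G; rewrite !iter_int_S_at0; ring. }
  assert (Hzeros : chain_in (fun x => 0 <= x /\ G (S N) x = 0) (S (2 * N))).
  { apply (chain_in_of_injective _ _ t); [intros i j Hi Hj; apply Ht_inj; lia|].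
    intros i Hi; split; [apply Ht_nonneg; lia|].
    unfold G; simpl; rewrite (HI N i) by lia; ring. }
  assert (Hdiff : forall x,
    expsum (N + N) (glue N c (fun j => - c' j)) (glue N a a') x = 0).
  { apply expsum_zeros_eq0, (chain_in_impl (fun x => 0 < x /\ G 0%nat x = 0)).
    - intros x [_ Hx]; rewrite <- expsum_sub; exact Hx.
    - replace (N + N)%nat with (2 * N)%nat by lia.
      exact (chain_in_descend G 0 (2 * N) N HG HG0 Hzeros). }
  assert (Hcoef : forall beta, rate_coef N c a beta = rate_coef N c' a' beta).
  { intro beta; apply Rminus_diag_uniq; rewrite rate_coef_sub.
    exact (rate_coef_eq0 _ _ _ Hdiff beta). }
  split; [exact (rate_coef_match N N c a c' a' Ha_inj Ha'_inj Hc_nz Hcoef)|].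
  intros m Hm.
  destruct (rate_coef_match N N c' a' c a Ha'_inj Ha_inj Hc'_nz
              (fun beta => eq_sym (Hcoef beta)) m Hm) as [n [Hn [Hcn Han]]].
  exists n; auto.
Qed.
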